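(* Let $k\ge 1$, $n_1,\dots,n_k\in\mathbb{N}$ and $m\in\mathbb{N}$ with $m\ge2$. For each $j$ let $I_j:\ell_2^{2n_j,\mathbb{R}}\to\ell_\infty^{N_j,\mathbb{R}}$ be an injective linear operator with $\|I_j\|\le1$ and $\|I_j^{-1}\|\le\frac{m}{m-1}$, and put $c^j_i=I_j(e_i)\in\mathbb{R}^{N_j}$ for $1\le i\le 2n_j$, with coordinates $c^j_i(s)$. Let $\rho=(\rho_{i_1,\dots,i_k})\in\mathbb{C}^{n_1}\otimes\cdots\otimes\mathbb{C}^{n_k}$. Consider as variables a complex array $\lambda=(\lambda_{i_1,\dots,i_k})$, $1\le i_j\le n_j$ (equivalently, the $2n_1\cdots n_k$ real numbers $\operatorname{Re}\lambda_{i_1,\dots,i_k},\operatorname{Im}\lambda_{i_1,\dots,i_k}$), and define the real array $\tilde\lambda_{i_1,\dots,i_k}$, $1\le i_j\le 2n_j$, as follows: for $j\le k$ let $i'_j=i_j$ if $i_j\le n_j$ and $i'_j=i_j-n_j$ if $i_j>n_j$; let $t$ be the number of $j\in\{1,\dots,k-1\}$ with $i_j>n_j$; then $\tilde\lambda_{i_1,\dots,i_k}=\operatorname{Re}(\mathrm{i}^{t}\lambda_{i'_1,\dots,i'_k})$ if $i_k\le n_k$ and $\tilde\lambda_{i_1,\dots,i_k}=\operatorname{Im}(\mathrm{i}^{t}\lambda_{i'_1,\dots,i'_k})$ if $i_k>n_k$ (here $\mathrm{i}=\sqrt{-1}$). Let $V$ be the optimal value of the linear programming problem: maximize $$\sum_{i_1,\dots,i_k=1}^{n_1,\dots,n_k}\operatorname{Re}(\rho_{i_1,\dots,i_k})\tilde\lambda_{i_1,\dots,i_k}-\sum_{i_1,\dots,i_{k-1}=1}^{n_1,\dots,n_{k-1}}\sum_{i_k=n_k+1}^{2n_k}\operatorname{Im}(\rho_{i_1,\dots,i_{k-1},i_k-n_k})\tilde\lambda_{i_1,\dots,i_k}$$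 subject to $$-1\le\sum_{i_1,\dots,i_k=1}^{2n_1,\dots,2n_k}\tilde\lambda_{i_1,\dots,i_k}\,c^1_{i_1}(s_1)\cdots c^k_{i_k}(s_k)\le1\quad\text{for all }1\le s_j\le N_j,\ 1\le j\le k.$$ Then $\pi(\rho)\le V\le\left(\frac{m}{m-1}\right)^k\pi(\rho)$, where $\pi(\rho)$ is the norm of $\rho$ in $\bigotimes_{j=1,\pi}^k\ell_2^{n_j,\mathbb{C}}$; i.e. $V$ equals this norm up to a relative error bounded by $\left(\frac{m}{m-1}\right)^k-1$.
   Context: $\ell_2^{n,\mathbb{C}}$ is $\mathbb{C}^n$ with the Euclidean norm, $\ell_2^{n,\mathbb{R}}$ is $\mathbb{R}^n$ with the Euclidean norm, $\ell_\infty^{N,\mathbb{R}}$ is $\mathbb{R}^N$ with the sup-norm, and $e_1,e_2,\dots$ is the canonical basis. For injective $I$, $\|I^{-1}\|$ is the norm of the inverse on the range of $I$. Tensors in $\mathbb{C}^{n_1}\otimes\cdots\otimes\mathbb{C}^{n_k}$ are identified with coefficient arrays with respect to $e_{i_1}\otimes\cdots\otimes e_{i_k}$. The projective norm on $\bigotimes_{j=1}^kX_j$ is $\pi(u)=\inf\{\sum_{i=1}^r\|u^1_i\|\cdots\|u^k_i\|: u=\sum_{i=1}^r u^1_i\otimes\cdots\otimes u^k_i\}$; $\bigotimes_{j=1,\pi}^kX_j$ denotes the tensor product with this norm. The array $\tilde\lambda$ is the coefficient array of the real $(k-1)$-linear map $\mathbb{R}^{2n_1}\times\cdots\times\mathbb{R}^{2n_{k-1}}\to\mathbb{R}^{2n_k}$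 obtained from the complex $(k-1)$-linear map associated with $\lambda$ by identifying $\mathbb{C}^{n}$ with $\mathbb{R}^{2n}$ via $z\mapsto(\operatorname{Re}z,\operatorname{Im}z)$. *)

From HB Require Import structures.
From mathcomp Require Import all_boot all_order all_algebra.
From mathcomp Require Import complex.
From mathcomp Require Import classical_sets reals.
Set Implicit Arguments. Unset Strict Implicit. Unset Printing Implicit Defensive.
Import Order.TTheory GRing.Theory Num.Theory.
Local Open Scope ring_scope.

(* Multi-indices (i_1,...,i_k) with 0 <= i_j < n j (0-based indexing). *)
Definition midx (k : nat) (n : 'I_k -> nat) := {dffun forall j : 'I_k, 'I_(n j)}.

Lemma halfidx_subproof (n : nat) (i : 'I_(n.*2)) : ((if i < n then val i else i - n) < n)%N.
Proof.
case: ifP => // /negbT; rewrite -leqNgt => Hn.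
by rewrite ltn_subLR // addnn ltn_ord.
Qed.
Definition halfidx (n : nat) (i : 'I_(n.*2)) : 'I_n := Ordinal (halfidx_subproof i).

Definition prime_idx (k : nat) (n : 'I_k -> nat) (i : midx (fun j => (n j).*2)) : midx n :=
  [ffun j => halfidx (i j)].

Section Defs.
Variable R : realType.

Definition l2R (p : nat) (x : 'rV[R]_p) : R := Num.sqrt (\sum_(i < p) x 0 i ^+ 2).
Definition linfR (p : nat) (y : 'rV[R]_p) : R := \big[Num.max/0]_(s < p) `|y 0 s|.
Definition l2C (p : nat) (x : 'I_p -> R[i]) : R :=
  Num.sqrt (\sum_(i < p) (complex.Re (x i) ^+ 2 + complex.Im (x i) ^+ 2)).

Definition projnorm (k : nat) (n : 'I_k -> nat) (rho : midx n -> R[i]) : R :=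
  inf [set x : R | exists (r : nat) (u : 'I_r -> forall j : 'I_k, 'I_(n j) -> R[i]),
        (forall i : midx n, rho i = \sum_(l < r) \prod_(j < k) u l j (i j)) /\
        x = \sum_(l < r) \prod_(j < k) l2C (u l j)].

Definition lamtilde (k : nat) (n : 'I_k -> nat) (lam : midx n -> R[i])
    (i : midx (fun j => (n j).*2)) : R :=
  let t := #|[set j : 'I_k | (val j < k.-1)%N && (n j <= i j)%N]| in
  let z := ('i%C ^+ t) * lam (prime_idx i) in
  if [exists j : 'I_k, (val j == k.-1) && (n j <= i j)%N] then complex.Im z else complex.Re z.

Definition lp_obj (k : nat) (n : 'I_k -> nat) (rho : midx n -> R[i])
    (lam : midx n -> R[i]) : R :=
  \sum_(i : midx (fun j => (n j).*2) | [forall j, (i j < n j)%N])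
     complex.Re (rho (prime_idx i)) * lamtilde lam i
  - \sum_(i : midx (fun j => (n j).*2) |
          [forall j, (val j < k.-1)%N ==> (i j < n j)%N] &&
          [exists j : 'I_k, (val j == k.-1) && (n j <= i j)%N])
     complex.Im (rho (prime_idx i)) * lamtilde lam i.

(* constraints of the LP; I j is the matrix of I_j (row i = c^j_i = I_j(e_i)) *)
Definition lp_feasible (k : nat) (n N : 'I_k -> nat)
    (I : forall j : 'I_k, 'M[R]_((n j).*2, N j)) (lam : midx n -> R[i]) : Prop :=
  forall s : midx N,
    -1 <= \sum_(i : midx (fun j => (n j).*2)) lamtilde lam i * \prod_(j < k) I j (i j) (s j)
    <= 1.

Definition lp_value (k : nat) (n N : 'I_k -> nat)
    (I : forall j : 'I_k, 'M[R]_((n j).*2, N j)) (rho : midx n -> R[i]) : R :=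
  sup [set lp_obj rho lam | lam in [set lam | lp_feasible I lam]].

End Defs.

From HB Require Import structures.
From mathcomp Require Import all_boot all_order all_algebra.
From mathcomp Require Import complex.
From mathcomp Require Import boolp classical_sets reals.
From mathcomp.algebra_tactics Require Import ring lra.
Set Implicit Arguments. Unset Strict Implicit. Unset Printing Implicit Defensive.
Import Order.TTheory GRing.Theory Num.Theory.
Local Open Scope ring_scope.

(* The objective equals [Re (sum_i rho_i lam_i)], and [lamtilde lam] is the
   coefficient array of the real k-linear form
   [T_lam (w_1, ..., w_k) = Re (sum_i lam_i prod_j z_j (i_j))], where
   [z_j = w_j' + i w_j''] is read off [w_j] in R^(2 n_j) (conjugated for the last
   factor). The constraints say [|T_lam| <= 1] when each [w_j] is a column of [I_j].

   Upper bound: by Cauchy-Schwarz and [|I_j^-1| <= C = m/(m-1)], a bound on all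
   columns in one slot gives a bound [C |w_j|] for arbitrary [w_j] there; freeing
   the slots one at a time yields [|T_lam (w)| <= C^k prod_j |w_j|], hence
   [Re <rho, lam> <= C^k pi(rho)] along any decomposition of [rho].

   Lower bound: Hahn-Banach, for a sublinear functional on a finitely spanned real
   vector space, gives a real-linear [G <= pi] with [G rho = pi(rho)]. Writing
   [G = Re <., lam>], the value of [G] at an elementary tensor of columns of the
   [I_j] is at most the product of their norms, which is [<= 1] since
   [|I_j| <= 1]; so [lam] is feasible with objective [pi(rho)]. *)

Section HahnBanach.
Variables (R : realType) (V : lmodType R) (p : V -> R).
Hypothesis p_subadd : forall x y, p (x + y) <= p x + p y.
Hypothesis p_homo : forall (a : R) x, 0 < a -> p (a *: x) = a * p x.

Definition subspace (S : V -> Prop) :=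
  [/\ S 0, (forall x y, S x -> S y -> S (x + y)) & (forall a x, S x -> S (a *: x))].

Definition dominated_linear_on (S : V -> Prop) (G : V -> R) :=
  [/\ subspace S, (forall x y, S x -> S y -> G (x + y) = G x + G y),
      (forall a x, S x -> G (a *: x) = a * G x) & (forall x, S x -> G x <= p x)].

Lemma sublinear0 : p 0 = 0.
Proof.
have := p_homo 0 (ltr0n R 2); rewrite scaler0 mulr_natl mulr2n.
by move/(congr1 (fun x => x - p 0)); rewrite addrK subrr => <-.
Qed.

Lemma subspaceB S x y : subspace S -> S x -> S y -> S (x - y).
Proof. by case=> _ SD SZ Sx Sy; apply: SD => //; rewrite -scaleN1r; apply: SZ. Qed.

Lemma dominated_linear_on0 S G : dominated_linear_on S G -> G 0 = 0.
Proof. by case=> [[S0 _ _] _ GZ _]; have := GZ 0 0 S0; rewrite scale0r mul0r. Qed.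

Lemma subspace_addZ_inj S y x1 x2 t1 t2 : subspace S -> ~ S y -> S x1 -> S x2 ->
  x1 + t1 *: y = x2 + t2 *: y -> t1 = t2 /\ x1 = x2.
Proof.
move=> subS Sy' Sx1 Sx2 E; have [t12 | t12] := eqVneq t1 t2.
  by subst t1; split=> //; apply: (addIr (t2 *: y)).
exfalso; apply: Sy'.
have E2 : (t1 - t2) *: y = x2 - x1.
  by rewrite scalerBl; apply/eqP; rewrite subr_eq addrAC -E addrAC subrr add0r.
have -> : y = (t1 - t2)^-1 *: (x2 - x1) by rewrite -E2 scalerA mulVf ?scale1r // subr_eq0.
by have [_ _ SZ] := subS; apply: SZ; apply: subspaceB subS _ _.
Qed.

(* [G' (x + t y) := G x + t c] on [S + R y]; for [t != 0] the domination
   [G' <= p] is one of the two hypotheses applied to [x / |t|]. *)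
Lemma dominated_extend_with S G y (c : R) : dominated_linear_on S G -> ~ S y ->
  (forall x, S x -> G x + c <= p (x + y)) ->
  (forall x, S x -> G x - c <= p (x - y)) ->
  exists S' G', [/\ dominated_linear_on S' G', S' y, G' y = c &
                    forall x, S x -> S' x /\ G' x = G x].
Proof.
move=> domG Sy' Hplus Hminus; have [subS GD GZ Gp] := domG; have [S0 SD SZ] := subS.
pose S' z := exists x t, S x /\ z = x + t *: y.
have [G' HG'] : {G' : V -> R & forall z, S' z ->
    exists x t, [/\ S x, z = x + t *: y & G' z = G x + t * c]}.
  apply: (choice (P := fun z v => S' z ->
    exists x t, [/\ S x, z = x + t *: y & v = G x + t * c])) => z.
  case: (pselect (S' z)) => [[x [t [Sx ->]]]|S'z]; last by exists 0.
  by exists (G x + t * c) => _; exists x, t.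
have G'E x t : S x -> G' (x + t *: y) = G x + t * c.
  move=> Sx; have [|x1 [t1 [Sx1 E ->]]] := HG' (x + t *: y); first by exists x, t.
  by have [-> ->] := subspace_addZ_inj subS Sy' Sx Sx1 E.
exists S', G'; split.
- split.
  + split; first by exists 0, 0; rewrite scale0r addr0.
    * move=> _ _ [x1 [t1 [Sx1 ->]]] [x2 [t2 [Sx2 ->]]].
      by exists (x1 + x2), (t1 + t2); rewrite scalerDl addrACA; split=> //; apply: SD.
    * move=> a _ [x [t [Sx ->]]]; exists (a *: x), (a * t).
      by rewrite scalerDr scalerA; split=> //; apply: SZ.
  + move=> _ _ [x1 [t1 [Sx1 ->]]] [x2 [t2 [Sx2 ->]]].
    by rewrite addrACA -scalerDl !G'E ?GD //; [ring | apply: SD].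
  + move=> a _ [x [t [Sx ->]]].
    by rewrite scalerDr scalerA !G'E ?GZ //; [ring | apply: SZ].
  + move=> _ [x [t [Sx ->]]]; rewrite G'E //.
    case: (ltgtP t 0) => [tlt0|tgt0|->]; last by rewrite scale0r mul0r !addr0 Gp.
    * have s0 : 0 < - t by rewrite oppr_gt0.
      have := ler_wpM2l (ltW s0) (Hminus _ (SZ (- t)^-1 _ Sx)).
      rewrite GZ // -p_homo // scalerBr scalerA mulfV ?gt_eqF // scale1r.
      by rewrite scaleNr opprK mulrBr mulrA mulfV ?gt_eqF // mul1r mulNr opprK.
    * have := ler_wpM2l (ltW tgt0) (Hplus _ (SZ t^-1 _ Sx)).
      rewrite GZ // -p_homo // scalerDr scalerA mulfV ?gt_eqF // scale1r.
      by rewrite mulrDr mulrA mulfV ?gt_eqF // mul1r.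
- by exists 0, 1; rewrite scale1r add0r.
- by have := G'E 0 1 S0; rewrite scale1r add0r mul1r (dominated_linear_on0 domG) add0r.
- move=> x Sx; split; first by exists x, 0; rewrite scale0r addr0.
  by have := G'E x 0 Sx; rewrite scale0r mul0r !addr0.
Qed.

(* Take [c := sup_x (G x - p (x - y))]: by subadditivity every [G x - p (x - y)]
   lies below every [p (x' + y) - G x']. *)
Lemma dominated_extension_constant S G y : dominated_linear_on S G -> exists c : R,
  (forall x, S x -> G x + c <= p (x + y)) /\ (forall x, S x -> G x - c <= p (x - y)).
Proof.
move=> [[S0 SD _] GD _ Gp].
pose A : set R := fun r => exists2 x, S x & r = G x - p (x - y).
have A_le x x' : S x -> S x' -> G x - p (x - y) <= p (x' + y) - G x'.
  move=> Sx Sx'; rewrite lerBrDr addrAC lerBlDr -GD //.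
  apply: le_trans (Gp _ (SD _ _ Sx Sx')) _.
  have -> : x + x' = (x - y) + (x' + y) by rewrite addrACA addNr addr0.
  by rewrite addrC; apply: p_subadd.
have A_ub x' : S x' -> ubound A (p (x' + y) - G x') by move=> Sx' _ [x Sx ->]; apply: A_le.
exists (sup A); split=> x Sx.
- by rewrite addrC -lerBrDr; apply: ge_sup (A_ub _ Sx); exists (G 0 - p (0 - y)), 0.
- rewrite lerBlDr addrC -lerBlDr; apply: ub_le_sup; last by exists x.
  by exists (p (0 + y) - G 0); apply: A_ub.
Qed.

Lemma dominated_extend S G y : dominated_linear_on S G ->
  exists S' G', [/\ dominated_linear_on S' G', S' y &
                    forall x, S x -> S' x /\ G' x = G x].
Proof.
move=> domG; case: (pselect (S y)) => Sy; first by exists S, G.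
have [c [Hplus Hminus]] := dominated_extension_constant y domG.
have [S' [G' [? ? _ ?]]] := dominated_extend_with domG Sy Hplus Hminus.
by exists S', G'.
Qed.

Lemma dominated_extend_seq (s : seq V) S G : dominated_linear_on S G ->
  exists S' G', [/\ dominated_linear_on S' G', {in s, forall v, S' v} &
                    forall x, S x -> S' x /\ G' x = G x].
Proof.
elim: s S G => [|v s IH] S G domG; first by exists S, G.
have [S1 [G1 [dom1 S1v ext1]]] := dominated_extend v domG.
have [S2 [G2 [dom2 S2s ext2]]] := IH _ _ dom1.
exists S2, G2; split => //.
- by move=> u; rewrite inE => /predU1P [->|/S2s//]; case: (ext2 _ S1v).
- by move=> x Sx; have [S1x <-] := ext1 _ Sx; apply: ext2.
Qed.

Theorem hahn_banach_span (s : seq V) (x0 : V) :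
  (forall S, subspace S -> {in s, forall u, S u} -> forall v, S v) ->
  exists G : V -> R, [/\ (forall x y, G (x + y) = G x + G y),
      (forall a x, G (a *: x) = a * G x), (forall x, G x <= p x) & G x0 = p x0].
Proof.
move=> s_span.
have extend_all S G : dominated_linear_on S G -> exists G' : V -> R,
    [/\ (forall x y, G' (x + y) = G' x + G' y), (forall a x, G' (a *: x) = a * G' x),
        (forall x, G' x <= p x) & forall x, S x -> G' x = G x].
  move=> domG; have [S' [G' [[subS' GD GZ Gp] S's ext]]] := dominated_extend_seq s domG.
  have S'T v : S' v by apply: s_span.
  by exists G'; split=> [x y|a x|x|x /ext[]//]; [apply: GD | apply: GZ | apply: Gp].
have dom0 : dominated_linear_on (fun z => z = 0) (fun _ => 0).
  split=> [|x y _ _|a x _|x ->]; rewrite ?addr0 ?mulr0 ?sublinear0 //.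
  by split=> // [x y -> ->|a x ->]; rewrite ?addr0 ?scaler0.
have [-> | x0_neq0] := eqVneq x0 0.
  have [G [GD GZ Gp G0]] := extend_all _ _ dom0.
  by exists G; split=> //; rewrite G0 ?sublinear0.
have [|||S1 [G1 [dom1 S1x0 G1x0 _]]] := @dominated_extend_with _ _ x0 (p x0) dom0.
- by move=> x0_eq0; rewrite x0_eq0 eqxx in x0_neq0.
- by move=> x ->; rewrite !add0r.
- move=> x ->; rewrite !sub0r -subr_ge0 opprK -sublinear0 -(addNr x0).
  exact: p_subadd.
have [G [GD GZ Gp GE]] := extend_all _ _ dom1.
by exists G; split=> //; rewrite GE.
Qed.

End HahnBanach.

Lemma dblidx_subproof n (b : bool) (i : 'I_n) : ((if b then i + n else i) < n.*2)%N.
Proof. by rewrite -addnn; case: b; rewrite ?ltn_add2r ?ltn_addr. Qed.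

Definition dblidx n (b : bool) (i : 'I_n) : 'I_(n.*2) := Ordinal (dblidx_subproof b i).

Lemma halfidx_dblidx n b (i : 'I_n) : halfidx (dblidx b i) = i.
Proof.
by apply: val_inj; case: b => /=; rewrite ?ltn_ord // ltnNge leq_addl addnK.
Qed.

Lemma dblidx_ge n b (i : 'I_n) : (n <= dblidx b i)%N = b.
Proof. by case: b; rewrite /= ?leq_addl // leqNgt ltn_ord. Qed.

Lemma dblidx_halfidx n (a : 'I_(n.*2)) : dblidx (n <= a)%N (halfidx a) = a.
Proof. by apply: val_inj => /=; case: leqP => //= /subnK. Qed.

Lemma big_dblidx (V : zmodType) n (F : 'I_(n.*2) -> V) :
  \sum_(a : 'I_(n.*2)) F a = \sum_(i : 'I_n) \sum_(b : bool) F (dblidx b i).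
Proof.
rewrite pair_bigA /= (reindex (fun q : 'I_n * bool => dblidx q.2 q.1)) //.
exists (fun a => (halfidx a, (n <= a)%N)) => [[i b] _|a _] /=.
  by rewrite halfidx_dblidx dblidx_ge.
exact: dblidx_halfidx.
Qed.

Section DoubledMultiIndex.
Variables (k : nat) (n : 'I_k -> nat).
Local Notation n2 := (fun j => (n j).*2).

Definition dblmidx (i : midx n) (b : {ffun 'I_k -> bool}) : midx n2 :=
  [ffun j => dblidx (b j) (i j)].

Definition upper_half (i : midx n2) : {ffun 'I_k -> bool} := [ffun j => (n j <= i j)%N].

Lemma prime_dblmidx i b : prime_idx (dblmidx i b) = i.
Proof. by apply/ffunP => j; rewrite !ffunE halfidx_dblidx. Qed.

Lemma dblmidx_ge i b j : (n j <= dblmidx i b j)%N = b j.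
Proof. by rewrite ffunE dblidx_ge. Qed.

Lemma upper_half_dblmidx i b : upper_half (dblmidx i b) = b.
Proof. by apply/ffunP => j; rewrite ffunE dblmidx_ge. Qed.

Lemma upper_half_eqP (i : midx n2) (b : {ffun 'I_k -> bool}) :
  reflect (forall j, (n j <= i j)%N = b j) (upper_half i == b).
Proof. by apply: (iffP eqP) => [<- j|E]; [rewrite ffunE | apply/ffunP => j; rewrite ffunE]. Qed.

Lemma big_dblmidx (V : zmodType) (P : pred {ffun 'I_k -> bool}) (F : midx n2 -> V) :
  \sum_(i : midx n2 | P (upper_half i)) F i =
  \sum_(i : midx n) \sum_(b | P b) F (dblmidx i b).
Proof.
rewrite pair_big_dep /= (reindex (fun q => dblmidx q.1 q.2)) /=.
  by apply: eq_bigl => q; rewrite upper_half_dblmidx.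
exists (fun a => (prime_idx a, upper_half a)) => [[i b] _|a _] /=.
  by rewrite prime_dblmidx upper_half_dblmidx.
by apply/ffunP => j; rewrite !ffunE dblidx_halfidx.
Qed.

Lemma big_dblmidxT (V : zmodType) (F : midx n2 -> V) :
  \sum_(i : midx n2) F i = \sum_(i : midx n) \sum_b F (dblmidx i b).
Proof. exact: (big_dblmidx xpredT). Qed.

Lemma big_dblmidx1 (V : zmodType) b (F : midx n2 -> V) :
  \sum_(i : midx n2 | upper_half i == b) F i = \sum_(i : midx n) F (dblmidx i b).
Proof. by rewrite (big_dblmidx (pred1 b)); apply: eq_bigr => i _; rewrite big_pred1_eq. Qed.

End DoubledMultiIndex.

Section CauchySchwarz.
Variable R : rcfType.

Definition l2 d (v : 'I_d -> R) : R := Num.sqrt (\sum_a v a ^+ 2).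

Lemma l2_ge0 d (v : 'I_d -> R) : 0 <= l2 v.
Proof. exact: sqrtr_ge0. Qed.

Lemma sqr_sum_mul_le d (u v : 'I_d -> R) :
  (\sum_a u a * v a) ^+ 2 <= (\sum_a u a ^+ 2) * (\sum_a v a ^+ 2).
Proof.
rewrite -subr_ge0.
pose f a b := u a ^+ 2 * v b ^+ 2 - u a * v a * (u b * v b).
have -> : (\sum_a u a ^+ 2) * (\sum_a v a ^+ 2) - (\sum_a u a * v a) ^+ 2 =
          \sum_a \sum_b f a b.
  rewrite expr2 !mulr_suml -sumrB; apply: eq_bigr => a _.
  by rewrite !mulr_sumr -sumrB.
(* Lagrange's identity: [f a b + f b a] is a square. *)
have : 0 <= \sum_a \sum_b (f a b + f b a).
  apply: sumr_ge0 => a _; apply: sumr_ge0 => b _.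
  by rewrite /f (_ : _ + _ = (u a * v b - u b * v a) ^+ 2) ?sqr_ge0 //; ring.
under eq_bigr do rewrite big_split.
rewrite big_split /= [X in _ + X]exchange_big /=; lra.
Qed.

Lemma cauchy_schwarz d (u v : 'I_d -> R) : `|\sum_a u a * v a| <= l2 u * l2 v.
Proof.
rewrite -sqrtrM; last by apply: sumr_ge0 => a _; apply: sqr_ge0.
by rewrite -sqrtr_sqr ler_wsqrtr // sqr_sum_mul_le.
Qed.

End CauchySchwarz.

Section ComplexParts.
Variable R : rcfType.

Lemma Re_sum (I : finType) (P : pred I) (F : I -> R[i]) :
  complex.Re (\sum_(i | P i) F i) = \sum_(i | P i) complex.Re (F i).
Proof. exact: (raddf_sum (@complex.Re R : Rcomplex R -> R)). Qed.

Lemma Re_mul_real (z : R[i]) (x : R) : complex.Re (z * x%:C%C) = complex.Re z * x.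
Proof. by case: z => a b /=; rewrite mulr0 subr0. Qed.

Lemma Re_mulNi (z : R[i]) : complex.Re (z * - 'i%C) = complex.Im z.
Proof. by case: z => a b /=; rewrite oppr0 mulr0 sub0r mulrN1 opprK. Qed.

End ComplexParts.

Section NormedEmbeddings.
Variable R : realType.

Lemma l2R_row d (v : 'I_d -> R) : l2R (\row_a v a) = l2 v.
Proof. by congr Num.sqrt; apply: eq_bigr => a _; rewrite mxE. Qed.

Lemma linfR_ge d (y : 'rV[R]_d) s : `|y 0 s| <= linfR y.
Proof. by rewrite /linfR (bigD1 s) //= le_max lexx. Qed.

Lemma linfR_le d (y : 'rV[R]_d) M : 0 <= M -> (forall s, `|y 0 s| <= M) -> linfR y <= M.
Proof.
move=> M0 yM; apply: (big_ind (fun x => x <= M)) => // x x' xM x'M.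
by rewrite ge_max xM x'M.
Qed.

Variables (d N : nat) (A : 'M[R]_(d, N)).

(* Test [x *m A] against the column [x] itself: [|x|^2 <= |x A|_oo <= |x|]. *)
Lemma l2_column_le1 : (forall x, linfR (x *m A) <= l2R x) -> forall s, l2 (fun a => A a s) <= 1.
Proof.
move=> A_le1 s; set x := \row_a A a s.
have xAs : (x *m A) 0 s = l2 (fun a => A a s) ^+ 2.
  rewrite mxE sqr_sqrtr; last by apply: sumr_ge0 => a _; apply: sqr_ge0.
  by apply: eq_bigr => a _; rewrite mxE expr2.
have := le_trans (linfR_ge _ s) (A_le1 x); rewrite xAs l2R_row ger0_norm ?sqr_ge0 //.
by have := l2_ge0 (fun a => A a s); nra.
Qed.

Lemma dot_le_columns (C M : R) (Y : 'I_d -> R) : 0 <= C -> 0 <= M ->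
  (forall x, l2R x <= C * linfR (x *m A)) ->
  (forall s, `|\sum_a A a s * Y a| <= M) ->
  forall v, `|\sum_a v a * Y a| <= l2 v * (C * M).
Proof.
move=> C0 M0 A_inv YM v; apply: le_trans (cauchy_schwarz _ _) _.
apply: ler_wpM2l; first exact: l2_ge0.
rewrite -l2R_row; apply: le_trans (A_inv _) (ler_wpM2l C0 _).
apply: linfR_le => // s; rewrite mxE.
by under eq_bigr do rewrite mxE mulrC; apply: YM.
Qed.

End NormedEmbeddings.

Section Realification.
Variables (R : realType) (k' : nat) (n : 'I_k'.+1 -> nat).
Local Notation k := k'.+1.
Local Notation n2 := (fun j => (n j).*2).
Implicit Types (lam : midx n -> R[i]) (w : forall j, 'I_(n2 j) -> R)
  (z : forall j, 'I_(n j) -> R[i]).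

Definition cform lam z : R[i] := \sum_(i : midx n) lam i * \prod_(j : 'I_k) z j (i j).

Definition rform lam w : R := \sum_(i : midx n2) lamtilde lam i * \prod_(j : 'I_k) w j (i j).

(* Conjugating the last factor makes its upper half contribute
   [Re (z * -i) = Im z], which is the [Im] branch of [lamtilde]. *)
Definition eps (j : 'I_k) : R[i] := if j == ord_max then - 'i%C else 'i%C.

Definition complexify w : forall j, 'I_(n j) -> R[i] :=
  fun j a => (w j (dblidx false a))%:C%C + eps j * (w j (dblidx true a))%:C%C.
Arguments complexify w j a : clear implicits.

Definition realify z : forall j, 'I_(n2 j) -> R :=
  fun j a => let x := z j (halfidx a) in
    if (n j <= a)%N then (if j == ord_max then - complex.Im x else complex.Im x)
    else complex.Re x.
Arguments realify z j a : clear implicits.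

Lemma lt_predk (j : 'I_k) : (j < k.-1)%N = (j != ord_max).
Proof. by rewrite -(inj_eq val_inj) /= ltn_neqAle -ltnS ltn_ord andbT. Qed.

Lemma lamtilde_dblmidx lam (i : midx n) (b : {ffun 'I_k -> bool}) :
  lamtilde lam (dblmidx i b) =
  let z := 'i%C ^+ #|[set j | (j != ord_max) && b j]| * lam i in
  if b ord_max then complex.Im z else complex.Re z.
Proof.
rewrite /lamtilde prime_dblmidx.
have -> : #|[set j : 'I_k | (j < k.-1)%N && (n j <= dblmidx i b j)%N]| =
          #|[set j | (j != ord_max) && b j]|.
  by apply: eq_card => j; rewrite !inE lt_predk dblmidx_ge.
have -> : [exists j : 'I_k, (val j == k.-1) && (n j <= dblmidx i b j)%N] = b ord_max.
  apply/existsP/idP => [[j /andP [/eqP jE]]|bk]; last first.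
    by exists ord_max; rewrite dblmidx_ge bk eqxx.
  by rewrite (_ : j = ord_max) ?dblmidx_ge //; apply: val_inj.
by [].
Qed.

Lemma prod_eps (b : {ffun 'I_k -> bool}) :
  \prod_(j : 'I_k) (if b j then eps j else 1) =
  'i%C ^+ #|[set j | (j != ord_max) && b j]| * (if b ord_max then - 'i%C else 1).
Proof.
rewrite (bigD1 ord_max) //= mulrC; congr (_ * _); last by rewrite /eps eqxx.
rewrite -prodr_const [RHS](eq_bigl (fun j => (j != ord_max) && b j)) => [|j]; last by rewrite inE.
by rewrite big_mkcondr; apply: eq_bigr => j jk; rewrite /eps (negPf jk).
Qed.

(* Expanding [prod_j (x_j + eps_j y_j)] over the choices [b] of summands. *)
Lemma rform_complexify lam w : rform lam w = complex.Re (cform lam (complexify w)).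
Proof.
rewrite /rform big_dblmidxT Re_sum; apply: eq_bigr => i _.
have -> : \prod_(j : 'I_k) complexify w j (i j) = \sum_(b : {ffun 'I_k -> bool})
    (\prod_(j : 'I_k) (if b j then eps j else 1)) * (\prod_(j : 'I_k) w j (dblmidx i b j))%:C%C.
  rewrite (eq_bigr (fun j => \sum_(c : bool)
      (if c then eps j else 1) * (w j (dblidx c (i j)))%:C%C)); last first.
    by move=> j _; rewrite big_bool /= mul1r addrC.
  rewrite bigA_distr_bigA; apply: eq_bigr => b _.
  by rewrite rmorph_prod -big_split; apply: eq_bigr => j _; rewrite ffunE; case: (b j).
rewrite mulr_sumr Re_sum; apply: eq_bigr => b _.
rewrite lamtilde_dblmidx prod_eps /=; case: (b ord_max).
  by rewrite -Re_mulNi -Re_mul_real; congr complex.Re; ring.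
by rewrite -Re_mul_real; congr complex.Re; ring.
Qed.

Lemma complexify_realify z j a : complexify (realify z) j a = z j a.
Proof.
rewrite /complexify /realify !dblidx_ge !halfidx_dblidx /eps /=.
by case: (j == ord_max); case: (z j a) => x y /=; congr Complex; ring.
Qed.

Lemma Re_cform lam z : complex.Re (cform lam z) = rform lam (realify z).
Proof.
rewrite rform_complexify; congr complex.Re; apply: eq_bigr => i _.
by congr (_ * _); apply: eq_bigr => j _; rewrite complexify_realify.
Qed.

Lemma l2C_complexify w j : l2C (complexify w j) = l2 (w j).
Proof.
rewrite /l2C /l2 big_dblidx; congr Num.sqrt; apply: eq_bigr => a _.
rewrite big_bool /complexify /eps /= addrC.
by case: (j == ord_max) => /=; ring.
Qed.

Lemma l2_realify z j : l2 (realify z j) = l2C (z j).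
Proof.
rewrite -l2C_complexify; congr l2C; apply: funext => a; exact: complexify_realify.
Qed.

End Realification.

Section RformBound.
Variables (R : realType) (k' : nat) (n N : 'I_k'.+1 -> nat).
Variable I : forall j : 'I_k'.+1, 'M[R]_((n j).*2, N j).
Variable C : R.
Hypothesis C_ge0 : 0 <= C.
Hypothesis I_inv : forall j (x : 'rV[R]_((n j).*2)), l2R x <= C * linfR (x *m I j).
Local Notation k := k'.+1.
Local Notation n2 := (fun j => (n j).*2).
Implicit Types (lam : midx n -> R[i]) (w : forall j, 'I_(n2 j) -> R).

Definition column j (s : 'I_(N j)) : 'I_(n2 j) -> R := fun a => I j a s.

Definition rform_slice lam (J : 'I_k) w (a : 'I_(n2 J)) : R :=
  \sum_(i : midx n2 | i J == a) lamtilde lam i * \prod_(j : 'I_k | j != J) w j (i j).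
Arguments rform_slice lam J w a : clear implicits.

Lemma rform_expand_at lam J w : rform lam w = \sum_a w J a * rform_slice lam J w a.
Proof.
rewrite /rform (partition_big (fun i : midx n2 => i J) xpredT) //.
apply: eq_bigr => a _; rewrite mulr_sumr; apply: eq_bigr => i /eqP iJ.
by rewrite (bigD1 J) //= iJ mulrCA.
Qed.

Lemma rform_slice_dfwith lam J w (v : 'I_(n2 J) -> R) :
  rform_slice lam J (dfwith w v) = rform_slice lam J w.
Proof.
apply: funext => a; apply: eq_bigr => i _; congr (_ * _).
by apply: eq_bigr => j jJ; rewrite dfwith_out // eq_sym.
Qed.

Variable lam : midx n -> R[i].
Hypothesis lam_feasible : lp_feasible I lam.

Lemma rform_column_bound (s : midx N) : `|rform lam (fun j => column (s j))| <= 1.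
Proof. by rewrite ler_norml; apply: lam_feasible. Qed.

(* Each step frees one more slot: [dot_le_columns] turns the bound on all
   columns of [I J] in slot [J] into a bound on arbitrary vectors there. *)
Lemma rform_bound_upto m : (m <= k)%N -> forall w,
  (forall j : 'I_k, (m <= j)%N -> exists s, w j = column s) ->
  `|rform lam w| <= C ^+ m * \prod_(j : 'I_k | (j < m)%N) l2 (w j).
Proof.
elim: m => [_ w w_col|m IH lt_mk w w_col].
  have [s Es] := fin_all_exists (fun j => w_col j isT).
  rewrite expr0 mul1r big_pred0 //.
  have -> : w = (fun j => column ([ffun j => s j] j)).
    by apply: functional_extensionality_dep => j; rewrite ffunE Es.
  exact: rform_column_bound.
pose J : 'I_k := Ordinal lt_mk.
pose M := C ^+ m * \prod_(j : 'I_k | (j < m)%N) l2 (w j).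
have M_ge0 : 0 <= M by rewrite mulr_ge0 ?exprn_ge0 ?prodr_ge0 // => j _; apply: l2_ge0.
have slice_col s : `|\sum_a I J a s * rform_slice lam J w a| <= M.
  have head_eq : \prod_(j : 'I_k | (j < m)%N) l2 (dfwith w (column s) j) =
                 \prod_(j : 'I_k | (j < m)%N) l2 (w j).
    apply: eq_bigr => j jm; rewrite dfwith_out //.
    by apply/eqP => /(congr1 val) /= jE; rewrite -jE ltnn in jm.
  have := IH (ltnW lt_mk) (dfwith w (column s)).
  rewrite (rform_expand_at _ J) dfwith_in rform_slice_dfwith head_eq; apply=> j le_mj.
  have [<-|Jj] := eqVneq J j; first by exists s; rewrite dfwith_in.
  rewrite dfwith_out //; apply: w_col; rewrite ltn_neqAle le_mj andbT.
  by apply: contra Jj => /eqP mj; apply/eqP/val_inj.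
have := dot_le_columns C_ge0 M_ge0 (@I_inv J) slice_col (w J).
rewrite -rform_expand_at => /le_trans; apply.
rewrite (bigD1 J) ?ltnSn //= (eq_bigl (fun j : 'I_k => (j < m)%N)) => [|j].
  by rewrite le_eqVlt exprS /M; apply/orP; left; apply/eqP; ring.
by rewrite ltnS leq_eqVlt -(inj_eq val_inj) /=; case: ltngtP.
Qed.

Lemma rform_bound w : `|rform lam w| <= C ^+ k * \prod_(j : 'I_k) l2 (w j).
Proof.
rewrite (eq_bigl (fun j : 'I_k => (j < k)%N)) => [|j]; last by rewrite ltn_ord.
by apply: rform_bound_upto => // j; rewrite leqNgt ltn_ord.
Qed.

Lemma Re_cform_bound z : complex.Re (cform lam z) <= C ^+ k * \prod_(j : 'I_k) l2C (z j).
Proof.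
rewrite Re_cform; apply: le_trans (ler_norm _) _; apply: le_trans (rform_bound _) _.
by under eq_bigr do rewrite l2_realify.
Qed.

End RformBound.

Section ProjectiveNorm.
Variables (R : realType) (k' : nat) (n : 'I_k'.+1 -> nat).
Local Notation k := k'.+1.
Implicit Types (rho : midx n -> R[i]) (z : forall j, 'I_(n j) -> R[i]).

Definition is_decomp_cost rho (x : R) :=
  exists (r : nat) (u : 'I_r -> forall j : 'I_k, 'I_(n j) -> R[i]),
    (forall i : midx n, rho i = \sum_(l < r) \prod_(j < k) u l j (i j)) /\
    x = \sum_(l < r) \prod_(j < k) l2C (u l j).

Lemma l2C_ge0 d (v : 'I_d -> R[i]) : 0 <= l2C v.
Proof. exact: sqrtr_ge0. Qed.

Lemma l2C_scale d (c : R) (v : 'I_d -> R[i]) : l2C (fun a => c%:C%C * v a) = `|c| * l2C v.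
Proof.
rewrite /l2C -sqrtr_sqr -sqrtrM ?sqr_ge0 // mulr_sumr; congr Num.sqrt.
by apply: eq_bigr => a _; case: (v a) => x y /=; ring.
Qed.

Lemma is_decomp_cost_ge0 rho x : is_decomp_cost rho x -> 0 <= x.
Proof.
move=> [r [u [_ ->]]]; apply: sumr_ge0 => l _.
by apply: prodr_ge0 => j _; apply: l2C_ge0.
Qed.

Lemma is_decomp_costD rho1 rho2 x1 x2 :
  is_decomp_cost rho1 x1 -> is_decomp_cost rho2 x2 ->
  is_decomp_cost (fun i => rho1 i + rho2 i) (x1 + x2).
Proof.
move=> [r1 [u1 [E1 ->]]] [r2 [u2 [E2 ->]]].
pose u l := match split l with inl a => u1 a | inr b => u2 b end.
have [uL uR] : (forall a, u (lshift r2 a) = u1 a) /\ (forall b, u (rshift r1 b) = u2 b).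
  by split=> a; rewrite /u ?(unsplitK (inl _)) ?(unsplitK (inr _)).
exists (r1 + r2)%N, u; split=> [i|]; rewrite big_split_ord.
  by rewrite E1 E2; congr (_ + _); apply: eq_bigr => l _; rewrite ?uL ?uR.
by congr (_ + _); apply: eq_bigr => l _; rewrite ?uL ?uR.
Qed.

Lemma is_decomp_costZ rho x (c : R) : is_decomp_cost rho x ->
  is_decomp_cost (fun i => c%:C%C * rho i) (`|c| * x).
Proof.
move=> [r [u [E ->]]].
pose sc (v : forall j, 'I_(n j) -> R[i]) j :=
  if j == ord0 then (fun a => c%:C%C * v j a) else v j.
have sc_first (T : comNzRingType) (f : 'I_k -> T) (g : T) :
    \prod_(j < k) (if j == ord0 then g * f j else f j) = g * \prod_(j < k) f j.
  rewrite (bigD1 ord0) //= [in RHS](bigD1 ord0) //= mulrA; congr (_ * _).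
  by apply: eq_bigr => j /negPf ->.
exists r, (fun l => sc (u l)); split=> [i|]; rewrite ?E mulr_sumr; apply: eq_bigr => l _.
  by rewrite -sc_first; apply: eq_bigr => j _; rewrite /sc; case: ifP.
by rewrite -sc_first; apply: eq_bigr => j _; rewrite /sc; case: ifP; rewrite ?l2C_scale.
Qed.

Lemma is_decomp_cost_elem z :
  is_decomp_cost (fun i => \prod_(j < k) z j (i j)) (\prod_(j < k) l2C (z j)).
Proof. by exists 1%N, (fun _ => z); split=> [i|]; rewrite big_ord1. Qed.

(* The decomposition of [rho] along the canonical basis. *)
Lemma is_decomp_cost_exists rho : exists x, is_decomp_cost rho x.
Proof.
pose z (a : midx n) : forall j : 'I_k, 'I_(n j) -> R[i] :=
  fun j x => (if j == ord0 then rho a else 1) * (x == a j)%:R.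
pose r := #|{: midx n}|.
exists (\sum_(l < r) \prod_(j < k) l2C (z (enum_val l) j)), r, (fun l => z (enum_val l)).
split=> // i.
rewrite -(big_enum_val (A := predT) (fun a => \prod_(j < k) z a j (i j))).
have z_delta a : \prod_(j < k) z a j (i j) = rho a * (a == i)%:R.
  rewrite big_split /= (bigD1 ord0) //= [X in _ * X * _]big1 => [|j /negPf -> //].
  rewrite mulr1; congr (_ * _); have [->|ai] := eqVneq a i.
    by rewrite big1 // => j _; rewrite eqxx.
  have [j ij] : exists j, i j != a j.
    apply/existsP; rewrite -negb_forall; apply: contra ai => /forallP ia.
    by apply/eqP/ffunP => j; apply/eqP; rewrite eq_sym ia.
  by rewrite (bigD1 j) //= (negPf ij) mul0r.
rewrite (eq_bigr _ (fun a _ => z_delta a)) (bigD1 i) //= eqxx mulr1 big1 ?addr0 //.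
by move=> a /negPf ->; rewrite mulr0.
Qed.

Lemma projnorm_le rho x : is_decomp_cost rho x -> projnorm rho <= x.
Proof. by move=> rho_x; apply: ge_inf => //; exists 0 => y; apply: is_decomp_cost_ge0. Qed.

Lemma projnorm_ge rho y : (forall x, is_decomp_cost rho x -> y <= x) -> y <= projnorm rho.
Proof.
by move=> y_lb; apply: lb_le_inf => //; have [x rho_x] := is_decomp_cost_exists rho; exists x.
Qed.

Lemma projnormD rho1 rho2 :
  projnorm (fun i => rho1 i + rho2 i) <= projnorm rho1 + projnorm rho2.
Proof.
rewrite -lerBlDr; apply: projnorm_ge => x1 rho1_x1.
rewrite lerBlDr addrC -lerBlDr; apply: projnorm_ge => x2 rho2_x2.
by rewrite lerBlDr addrC; apply/projnorm_le/is_decomp_costD.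
Qed.

Lemma projnormZ_le rho (c : R) :
  projnorm (fun i => c%:C%C * rho i) <= `|c| * projnorm rho.
Proof.
have [->|c_neq0] := eqVneq c 0.
  rewrite normr0 mul0r; apply: projnorm_le.
  by exists 0%N, (fun _ _ _ => 0); split=> [i|]; rewrite !big_ord0 ?mul0r.
rewrite -ler_pdivrMl ?normr_gt0 //; apply: projnorm_ge => x rho_x.
by rewrite ler_pdivrMl ?normr_gt0 //; apply/projnorm_le/is_decomp_costZ.
Qed.

End ProjectiveNorm.

Section LPObjective.
Variables (R : realType) (k' : nat) (n : 'I_k'.+1 -> nat).
Local Notation k := k'.+1.
Local Notation n2 := (fun j => (n j).*2).

Lemma all_lower_halfE (i : midx n2) :
  [forall j, (i j < n j)%N] = (upper_half i == [ffun => false]).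
Proof.
apply/forallP/upper_half_eqP => E j; first by rewrite ffunE leqNgt E.
by rewrite ltnNge E ffunE.
Qed.

Lemma only_last_upper_halfE (i : midx n2) :
  [forall j : 'I_k, (j < k.-1)%N ==> (i j < n j)%N] &&
  [exists j : 'I_k, (val j == k.-1) && (n j <= i j)%N] =
  (upper_half i == [ffun j => j == ord_max]).
Proof.
apply/andP/upper_half_eqP => [[/forallP lo /existsP [j0 /andP [/eqP j0k hi]]] j | E].
  rewrite ffunE; have [->|jk] := eqVneq j ord_max.
    by rewrite (_ : ord_max = j0) //; apply: val_inj.
  by move: (lo j); rewrite lt_predk jk ltnNge => /negbTE.
split; first by apply/forallP => j; rewrite lt_predk ltnNge E ffunE; case: eqP.
by apply/existsP; exists ord_max; rewrite E ffunE eqxx andbT; apply/eqP.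
Qed.

Lemma lp_objE (rho lam : midx n -> R[i]) :
  lp_obj rho lam = complex.Re (\sum_i rho i * lam i).
Proof.
rewrite /lp_obj (eq_bigl _ _ all_lower_halfE) (eq_bigl _ _ only_last_upper_halfE).
rewrite !big_dblmidx1 Re_sum -sumrB; apply: eq_bigr => i _.
rewrite !prime_dblmidx !lamtilde_dblmidx /= !ffunE eqxx.
have card0 (P : pred 'I_k) : P =1 xpred0 -> #|[set j | P j]| = 0%N.
  by move=> P0; apply: eq_card0 => j; rewrite inE P0.
rewrite !card0 => [|j|j]; rewrite ?ffunE ?andbF ?andNb // expr0 !mul1r.
by case: (rho i) => a b; case: (lam i) => c d.
Qed.

End LPObjective.

Section NormingFunctional.
Variables (R : realType) (k' : nat) (n : 'I_k'.+1 -> nat).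
Local Notation k := k'.+1.
Local Notation tensor := {ffun midx n -> Rcomplex R}.
Implicit Types (x y : tensor) (a : R).

Definition tnorm (x : tensor) : R := projnorm (fun i => x i : R[i]).

Lemma scalecE a (z : Rcomplex R) : a *: z = (a%:C * (z : R[i]))%C.
Proof. by case: z => x y; congr Complex; rewrite /= ?mul0r ?subr0 ?addr0. Qed.

Lemma tnormD x y : tnorm (x + y) <= tnorm x + tnorm y.
Proof.
rewrite /tnorm (_ : (fun i => _) = (fun i => x i + y i)) ?projnormD //.
by apply: funext => i; rewrite ffunE.
Qed.

Lemma tnormZ_le a x : tnorm (a *: x) <= `|a| * tnorm x.
Proof.
rewrite /tnorm (_ : (fun i => _) = (fun i => a%:C%C * x i)) ?projnormZ_le //.
by apply: funext => i; rewrite ffunE scalecE.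
Qed.

Lemma tnormZ a x : 0 < a -> tnorm (a *: x) = a * tnorm x.
Proof.
move=> a_gt0; apply/eqP; rewrite eq_le (le_trans (tnormZ_le _ _)) ?gtr0_norm //=.
rewrite -ler_pdivlMl // -[x in tnorm x](scale1r x) -(mulVf (lt0r_neq0 a_gt0)) -scalerA.
by apply: le_trans (tnormZ_le _ _) _; rewrite ger0_norm ?invr_ge0 // ltW.
Qed.

Definition tensor_unit (q : midx n * bool) : tensor :=
  [ffun i => if i == q.1 then (if q.2 then 'i%C else 1) else 0].

Lemma tensor_expand x : x = \sum_i (complex.Re (x i) *: tensor_unit (i, false) +
                                     complex.Im (x i) *: tensor_unit (i, true)).
Proof.
apply/ffunP => i; rewrite sum_ffunE (bigD1 i) //= big1 ?addr0 => [|i' i'i].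
  by rewrite !ffunE !eqxx /= !scalecE; case: (x i) => a b; congr Complex => /=; ring.
by rewrite !ffunE eq_sym (negPf i'i) !scaler0 addr0.
Qed.

Lemma tensor_units_span (S : tensor -> Prop) : subspace S ->
  {in [seq tensor_unit q | q <- enum {: midx n * bool}], forall u, S u} -> forall v, S v.
Proof.
move=> [S0 SD SZ] S_units v; rewrite (tensor_expand v).
apply: (big_ind S) => // i _.
by apply: SD; apply: SZ; apply: S_units; apply: map_f; rewrite mem_enum.
Qed.

Variable G : tensor -> R.
Hypothesis GD : forall x y, G (x + y) = G x + G y.
Hypothesis GZ : forall a x, G (a *: x) = a * G x.

Definition dual_lam (i : midx n) : R[i] :=
  Complex (G (tensor_unit (i, false))) (- G (tensor_unit (i, true))).

Lemma G_dual_lam x : G x = complex.Re (\sum_i x i * dual_lam i).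
Proof.
have G0 : G 0 = 0 by rewrite -(scale0r 0) GZ mul0r.
rewrite {1}(tensor_expand x) (big_morph G GD G0) Re_sum; apply: eq_bigr => i _.
by rewrite GD !GZ /dual_lam; case: (x i) => a b /=; ring.
Qed.

Hypothesis G_le : forall x, G x <= tnorm x.

Lemma norm_G_le x : `|G x| <= tnorm x.
Proof.
rewrite ler_norml G_le andbT lerNl -mulN1r -GZ.
by apply: le_trans (G_le _) _; apply: le_trans (tnormZ_le _ _) _; rewrite normrN1 mul1r.
Qed.

End NormingFunctional.

Section LPBounds.
Variables (R : realType) (k' : nat) (n N : 'I_k'.+1 -> nat).
Variable I : forall j : 'I_k'.+1, 'M[R]_((n j).*2, N j).
Variable C : R.
Hypothesis C_gt0 : 0 < C.
Hypothesis I_norm : forall j (x : 'rV[R]_((n j).*2)), linfR (x *m I j) <= l2R x.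
Hypothesis I_inv : forall j (x : 'rV[R]_((n j).*2)), l2R x <= C * linfR (x *m I j).
Variable rho : midx n -> R[i].
Local Notation k := k'.+1.

Lemma lp_obj_le lam : lp_feasible I lam -> lp_obj rho lam <= C ^+ k * projnorm rho.
Proof.
move=> lam_feas; rewrite lp_objE -ler_pdivrMl ?exprn_gt0 //.
apply: projnorm_ge => x [r [u [rhoE ->]]]; rewrite ler_pdivrMl ?exprn_gt0 //.
have -> : \sum_i rho i * lam i = \sum_(l < r) cform lam (u l).
  under eq_bigr do rewrite rhoE mulr_suml.
  by rewrite exchange_big; apply: eq_bigr => l _; apply: eq_bigr => i _; rewrite mulrC.
rewrite Re_sum mulr_sumr; apply: ler_sum => l _.
exact (Re_cform_bound (ltW C_gt0) (@I_inv) lam_feas (u l)).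
Qed.

Lemma lp_obj_norming : exists2 lam, lp_feasible I lam & lp_obj rho lam = projnorm rho.
Proof.
have [G [GD GZ G_le Grho]] := hahn_banach_span (@tnormD R k' n) (@tnormZ R k' n)
  [ffun i => rho i] (@tensor_units_span R k' n).
exists (dual_lam G); last first.
  have -> : projnorm rho = tnorm [ffun i => rho i].
    by rewrite /tnorm; congr projnorm; apply: funext => i; rewrite ffunE.
  rewrite lp_objE -Grho (G_dual_lam GD GZ).
  by congr complex.Re; apply: eq_bigr => i _; rewrite ffunE.
move=> s; rewrite -ler_norml.
change (`|rform (dual_lam G) (fun j => column I (s j))| <= 1).
rewrite rform_complexify; set z := complexify _.
have -> : complex.Re (cform (dual_lam G) z) = G [ffun i : midx n => \prod_(j : 'I_k) z j (i j)].
  by rewrite (G_dual_lam GD GZ); congr complex.Re; apply: eq_bigr => i _; rewrite ffunE mulrC.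
apply: le_trans (norm_G_le GZ G_le _) _.
rewrite /tnorm (_ : (fun i => _) = (fun i : midx n => \prod_(j : 'I_k) z j (i j))); last first.
  by apply: funext => i; rewrite ffunE.
apply: le_trans (projnorm_le (is_decomp_cost_elem z)) _.
apply: prodr_ile1 => j _; rewrite l2C_ge0 /z l2C_complexify.
exact: l2_column_le1 (@I_norm j) (s j).
Qed.

Local Open Scope classical_set_scope.

Lemma lp_value_bounds :
  projnorm rho <= lp_value I rho /\ lp_value I rho <= C ^+ k * projnorm rho.
Proof.
have ub : ubound [set lp_obj rho lam | lam in [set lam | lp_feasible I lam]]
                 (C ^+ k * projnorm rho).
  by move=> _ [lam lam_feas <-]; apply: lp_obj_le.
have [lam lam_feas lamE] := lp_obj_norming.
split; first by rewrite -lamE; apply: ub_le_sup; [exists (C ^+ k * projnorm rho) | exists lam].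
by apply: ge_sup _ ub; exists (lp_obj rho lam), lam.
Qed.

End LPBounds.

Theorem theorem2 (R : realType) (k : nat) (hk : (1 <= k)%N) (n : 'I_k -> nat)
  (m : nat) (hm : (2 <= m)%N) (N : 'I_k -> nat)
  (I : forall j : 'I_k, 'M[R]_((n j).*2, N j))
  (I_inj : forall j : 'I_k, injective (fun x : 'rV[R]_((n j).*2) => x *m I j))
  (I_norm : forall (j : 'I_k) (x : 'rV[R]_((n j).*2)), linfR (x *m I j) <= l2R x)
  (I_invnorm : forall (j : 'I_k) (x : 'rV[R]_((n j).*2)),
      l2R x <= m%:R / (m%:R - 1) * linfR (x *m I j))
  (rho : midx n -> R[i]) :
  projnorm rho <= lp_value I rho /\
  lp_value I rho <= (m%:R / (m%:R - 1)) ^+ k * projnorm rho.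
Proof.
case: k hk n N I I_inj I_norm I_invnorm rho => [//|k'] _ n N I _ I_norm I_inv rho.
have C_gt0 : 0 < m%:R / (m%:R - 1) :> R.
  have m_ge2 : (2 : R) <= m%:R by rewrite ler_nat.
  by apply: divr_gt0; lra.
exact (lp_value_bounds C_gt0 I_norm I_inv rho).
Qed.
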